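(* The set $\mathcal{K}(H)$ of compact operators is an $F_{\sigma\delta}$ subset of $\mathcal{B}(H)$ in the strong operator topology, i.e., a countable intersection of countable unions of strongly closed sets.
   Context: $H$ is a fixed infinite-dimensional separable complex Hilbert space, $\mathcal{B}(H)$ the bounded operators on $H$, with the strong operator topology (topology of pointwise norm convergence on $H$). $\mathcal{K}(H)$ is the set of compact operators. *)

From Stdlib Require Import Reals List.
Open Scope R_scope.

Record C := mkC { re : R ; im : R }.
Definition Cadd (a b : C) : C := mkC (re a + re b) (im a + im b).
Definition Csub (a b : C) : C := mkC (re a - re b) (im a - im b).
Definition Cmul (a b : C) : C :=
  mkC (re a * re b - im a * im b) (re a * im b + im a * re b).
Definition Cnorm2 (a : C) : R := re a * re a + im a * im a.

Definition vec := nat -> C.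
Definition vsub (x y : vec) : vec := fun n => Csub (x n) (y n).

Definition psum (x : vec) (n : nat) : R := sum_f_R0 (fun k => Cnorm2 (x k)) n.

Definition normsq_le (x : vec) (d : R) : Prop := forall n, psum x n <= d.

Definition l2 (x : vec) : Prop := exists d, normsq_le x d.

(* The separable infinite-dimensional complex Hilbert space H = l^2(N). *)
Definition H := { x : vec | l2 x }.
Definition hv (x : H) : vec := proj1_sig x.

Definition dist_lt (x y : vec) (eps : R) : Prop :=
  exists d, d < eps * eps /\ normsq_le (vsub x y) d.

Record BOp := mkBOp {
  op : H -> H ;
  op_add : forall x y z : H,
      (forall n, hv z n = Cadd (hv x n) (hv y n)) ->
      forall n, hv (op z) n = Cadd (hv (op x) n) (hv (op y) n) ;
  op_scale : forall (c : C) (x z : H),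
      (forall n, hv z n = Cmul c (hv x n)) ->
      forall n, hv (op z) n = Cmul c (hv (op x) n) ;
  op_bdd : exists M, 0 <= M /\
      forall (x : H) d, normsq_le (hv x) d -> normsq_le (hv (op x)) (M * M * d)
}.

Definition converges (u : nat -> H) (y : H) : Prop :=
  forall eps, eps > 0 -> exists N, forall k, (k >= N)%nat -> dist_lt (hv (u k)) (hv y) eps.

(* T is compact: the image of the unit ball is relatively compact, i.e.
   every bounded sequence x_k has a subsequence with T x_{phi k} convergent in H. *)
Definition compact_op (T : BOp) : Prop :=
  forall x : nat -> H, (exists M, forall k, normsq_le (hv (x k)) M) ->
  exists (phi : nat -> nat) (y : H),
    (forall k, (phi k < phi (S k))%nat) /\
    converges (fun k => op T (x (phi k))) y.

Definition SOT_open (U : BOp -> Prop) : Prop :=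
  forall T, U T -> exists (xs : list H) (eps : R), eps > 0 /\
    forall S, (forall x, In x xs -> dist_lt (hv (op S x)) (hv (op T x)) eps) -> U S.

Definition SOT_closed (F : BOp -> Prop) : Prop := SOT_open (fun T => ~ F T).

Definition SOT_Fsigmadelta (P : BOp -> Prop) : Prop :=
  exists F : nat -> nat -> BOp -> Prop,
    (forall m n, SOT_closed (F m n)) /\
    (forall T, P T <-> forall m, exists n, F m n T).

From Stdlib Require Import Reals List Lra Lia Rtopology ClassicalEpsilon Classical.
Open Scope R_scope.

(* Let P_N be the projection onto the coordinates 0..N.  An operator T is compact iff for
   every eps > 0 some N makes ||(I - P_N) T x||^2 <= eps uniformly on the unit ball.  For
   fixed N and eps this condition is strongly closed, since each partial sum of
   ||(I - P_N) T x||^2 depends continuously on T x; ranging eps over 1/(m+1) exhibits the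
   compact operators as an F_sigma_delta.
   Compact => uniform tails: unit vectors x_N with large tails of T x_N beyond N would give a
   convergent subsequence of (T x_N) whose limit has large tails arbitrarily far out.
   Uniform tails => compact: a diagonal extraction makes (T x_k) converge coordinatewise,
   and coordinatewise convergence plus uniformly small tails is norm convergence. *)

Lemma Cnorm2_ge0 a : 0 <= Cnorm2 a.
Proof. unfold Cnorm2; nra. Qed.

Lemma Cnorm2_Csub_sym a b : Cnorm2 (Csub a b) = Cnorm2 (Csub b a).
Proof. unfold Cnorm2, Csub; simpl; ring. Qed.

Lemma Cnorm2_Csub_le a b : Cnorm2 (Csub a b) <= 2 * Cnorm2 a + 2 * Cnorm2 b.
Proof.
  unfold Cnorm2, Csub; simpl.
  pose proof (Rle_0_sqr (re a + re b)); pose proof (Rle_0_sqr (im a + im b)).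
  unfold Rsqr in *; lra.
Qed.

Lemma Cnorm2_le_weighted a b (l : R) : 0 < l ->
  Cnorm2 b <= (1 + l) * Cnorm2 a + (1 + / l) * Cnorm2 (Csub b a).
Proof.
  intros Hl.
  assert (young : forall u v, 2 * u * v <= l * u * u + / l * v * v).
  { intros u v.
    assert (Hsq : 0 <= / l * ((l * u - v) * (l * u - v)))
      by (apply Rmult_le_pos; [left; apply Rinv_0_lt_compat | apply Rle_0_sqr]; lra).
    replace (/ l * ((l * u - v) * (l * u - v))) with (l * u * u - 2 * u * v + / l * v * v)
      in Hsq by (field; lra).
    lra. }
  pose proof (young (re a) (re b - re a)); pose proof (young (im a) (im b - im a)).
  unfold Cnorm2, Csub; simpl; lra.
Qed.

Lemma Cnorm2_Cmul_real (c : R) a : Cnorm2 (Cmul (mkC c 0) a) = c * c * Cnorm2 a.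
Proof. unfold Cnorm2, Cmul; simpl; ring. Qed.

Lemma psum_ge0 w n : 0 <= psum w n.
Proof.
  unfold psum; induction n; simpl; [apply Cnorm2_ge0|].
  pose proof (Cnorm2_ge0 (w (S n))); lra.
Qed.

Lemma psum_le_psum w n m : (n <= m)%nat -> psum w n <= psum w m.
Proof.
  induction 1; [lra|].
  unfold psum in *; simpl; pose proof (Cnorm2_ge0 (w (S m))); lra.
Qed.

Lemma Cnorm2_le_psum w n : Cnorm2 (w n) <= psum w n.
Proof.
  destruct n; unfold psum; simpl; [lra|].
  pose proof (psum_ge0 w n); unfold psum in *; lra.
Qed.

(* [tail_sum w N n] is the partial sum up to [n] of the series for the squared norm of
   [(I - P_N) w], where [P_N] projects onto the coordinates [0..N]. *)
Definition tail_term (w : vec) (N k : nat) : R :=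
  if Nat.leb k N then 0 else Cnorm2 (w k).

Definition tail_sum (w : vec) (N n : nat) : R := sum_f_R0 (tail_term w N) n.

Lemma tail_sum_psum w N n : tail_sum w N n = psum w n - psum w (Nat.min n N).
Proof.
  unfold tail_sum; induction n as [|n IH].
  - replace (Nat.min 0 N) with 0%nat by lia; unfold tail_term; simpl; ring.
  - cbn [sum_f_R0]; rewrite IH; unfold tail_term, psum; cbn [sum_f_R0].
    destruct (Nat.leb (S n) N) eqn:E; [apply Nat.leb_le in E | apply Nat.leb_gt in E].
    + replace (Nat.min (S n) N) with (S n) by lia; replace (Nat.min n N) with n by lia.
      cbn [sum_f_R0]; ring.
    + replace (Nat.min (S n) N) with N by lia; replace (Nat.min n N) with N by lia; ring.
Qed.

Lemma psum_le_head_tail w N n : psum w n <= psum w N + tail_sum w N n.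
Proof.
  rewrite tail_sum_psum; pose proof (psum_le_psum w (Nat.min n N) N ltac:(lia)); lra.
Qed.

Lemma tail_sum_le_psum w N n : tail_sum w N n <= psum w n.
Proof. rewrite tail_sum_psum; pose proof (psum_ge0 w (Nat.min n N)); lra. Qed.

Lemma tail_sum_antimono w N N' n : (N <= N')%nat -> tail_sum w N' n <= tail_sum w N n.
Proof.
  intro HN; rewrite !tail_sum_psum.
  pose proof (psum_le_psum w (Nat.min n N) (Nat.min n N') ltac:(lia)); lra.
Qed.

Lemma l2_tail_sum_small y : l2 y -> forall eps, 0 < eps -> exists N, forall n, tail_sum y N n <= eps.
Proof.
  intros [D HD] eps Heps.
  set (E := fun r => exists n, r = psum y n).
  destruct (completeness E) as [L [HL Hlub]].
  { exists D; intros r [n ->]; apply HD. }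
  { exists (psum y 0); exists 0%nat; reflexivity. }
  assert (Hclose : exists N, L - eps < psum y N).
  { apply NNPP; intro Hc; enough (L <= L - eps) by lra.
    apply Hlub; intros r [n ->]; apply Rnot_lt_le; intro; apply Hc; exists n; lra. }
  destruct Hclose as [N HN]; exists N; intro n; rewrite tail_sum_psum.
  destruct (Nat.le_gt_cases N n).
  - replace (Nat.min n N) with N by lia. assert (psum y n <= L) by (apply HL; exists n; auto). lra.
  - replace (Nat.min n N) with n by lia; lra.
Qed.

Lemma sum_f_R0_le_comb (f g h : nat -> R) a b n :
  (forall k, f k <= a * g k + b * h k) ->
  sum_f_R0 f n <= a * sum_f_R0 g n + b * sum_f_R0 h n.
Proof.
  intro Hk; induction n; simpl; [apply Hk|].
  pose proof (Hk (S n)); rewrite !Rmult_plus_distr_l; lra.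
Qed.

Lemma tail_sum_le_weighted a b N n l : 0 < l ->
  tail_sum b N n <= (1 + l) * tail_sum a N n + (1 + / l) * tail_sum (vsub b a) N n.
Proof.
  intro Hl; apply sum_f_R0_le_comb; intro k; unfold tail_term, vsub.
  destruct (Nat.leb k N); [lra | now apply Cnorm2_le_weighted].
Qed.

Lemma tail_sum_vsub_le a b N n : tail_sum (vsub a b) N n <= 2 * tail_sum a N n + 2 * tail_sum b N n.
Proof.
  apply sum_f_R0_le_comb; intro k; unfold tail_term, vsub.
  destruct (Nat.leb k N); [lra | apply Cnorm2_Csub_le].
Qed.

Definition uniform_tail_le (N : nat) (eps : R) (T : BOp) : Prop :=
  forall x : H, normsq_le (hv x) 1 -> forall n, tail_sum (hv (op T x)) N n <= eps.

Lemma uniform_tail_le_weaken N eps eps' T :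
  eps <= eps' -> uniform_tail_le N eps T -> uniform_tail_le N eps' T.
Proof. intros He HT x Hx n; specialize (HT x Hx n); lra. Qed.

Lemma tail_sum_gt_stable a N n e : 0 < e < tail_sum a N n ->
  exists q, 0 < q /\ forall b d, d < q -> normsq_le (vsub b a) d -> e < tail_sum b N n.
Proof.
  intros [He Ht]; set (t := tail_sum a N n) in *.
  set (l := (t - e) / (2 * e)).
  assert (Hl : 0 < l) by (unfold l; apply Rdiv_lt_0_compat; lra).
  assert (Hl' : 0 < / l) by (apply Rinv_0_lt_compat; lra).
  set (q := (t - e) / (4 * (1 + / l))).
  exists q; split; [unfold q; apply Rdiv_lt_0_compat; lra|].
  intros b d Hd Hba; apply Rnot_le_lt; intro Hs.
  assert (Hab : tail_sum (vsub a b) N n <= d).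
  { eapply Rle_trans; [apply tail_sum_le_psum|].
    unfold psum; erewrite sum_eq; [apply (Hba n)|].
    intros i _; apply Cnorm2_Csub_sym. }
  pose proof (tail_sum_le_weighted b a N n l Hl) as Hw; fold t in Hw.
  assert ((1 + l) * tail_sum b N n <= (1 + l) * e) by (apply Rmult_le_compat_l; lra).
  assert ((1 + / l) * tail_sum (vsub a b) N n <= (1 + / l) * q)
    by (apply Rmult_le_compat_l; lra).
  assert ((1 + / l) * q = (t - e) / 4) by (unfold q; field; lra).
  assert ((1 + l) * e = (t + e) / 2) by (unfold l; field; lra).
  lra.
Qed.

Lemma uniform_tail_le_closed N eps : 0 < eps -> SOT_closed (uniform_tail_le N eps).
Proof.
  intros Heps T HT.
  assert (Hbad : exists (x : H) n, normsq_le (hv x) 1 /\ eps < tail_sum (hv (op T x)) N n).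
  { apply NNPP; intro Hc; apply HT; intros x Hx n; apply Rnot_lt_le; intro.
    apply Hc; exists x, n; auto. }
  destruct Hbad as (x & n & Hx & Hgt).
  destruct (tail_sum_gt_stable (hv (op T x)) N n eps (conj Heps Hgt)) as (q & Hq & Hstab).
  exists (x :: nil), (sqrt q); split; [now apply sqrt_lt_R0|].
  intros S HS HSin.
  destruct (HS x (or_introl eq_refl)) as (d & Hd & Hdist).
  rewrite sqrt_sqrt in Hd by lra.
  specialize (HSin x Hx n); specialize (Hstab _ d Hd Hdist); lra.
Qed.

Lemma sum_f_R0_Cnorm2_scale (f : nat -> bool) w w' c n :
  (forall k, w' k = Cmul (mkC c 0) (w k)) ->
  sum_f_R0 (fun k => if f k then 0 else Cnorm2 (w' k)) n
  = c * c * sum_f_R0 (fun k => if f k then 0 else Cnorm2 (w k)) n.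
Proof.
  intro Hw; rewrite scal_sum; apply sum_eq; intros k _.
  destruct (f k); [ring | rewrite Hw, Cnorm2_Cmul_real; ring].
Qed.

Lemma uniform_tail_le_ball N eps T (x : H) M : 0 < M ->
  uniform_tail_le N eps T -> normsq_le (hv x) M ->
  forall n, tail_sum (hv (op T x)) N n <= M * eps.
Proof.
  intros HM HT Hx n.
  set (c := / sqrt M).
  assert (Hcc : c * c = / M) by (unfold c; rewrite <- Rinv_mult, sqrt_sqrt; lra).
  assert (HMc : M * (c * c) = 1) by (rewrite Hcc; field; lra).
  set (xv := fun k => Cmul (mkC c 0) (hv x k)).
  assert (Hxv : normsq_le xv 1).
  { intro m; specialize (Hx m).
    unfold psum; rewrite (sum_f_R0_Cnorm2_scale (fun _ => false) (hv x) xv c m) by reflexivity.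
    fold (psum (hv x) m); nra. }
  set (x' := exist _ xv (ex_intro _ 1 Hxv) : H).
  specialize (HT x' Hxv n); unfold tail_sum, tail_term in HT.
  rewrite (sum_f_R0_Cnorm2_scale (fun k => Nat.leb k N) (hv (op T x)) _ c)
    in HT by (apply (op_scale T (mkC c 0) x x'); reflexivity).
  fold (tail_sum (hv (op T x)) N n) in HT.
  apply (Rmult_le_compat_l M) in HT; [|lra].
  rewrite <- Rmult_assoc, HMc, Rmult_1_l in HT; exact HT.
Qed.

Definition strictly_increasing (s : nat -> nat) : Prop := forall k, (s k < s (S k))%nat.

Lemma strictly_increasing_ge s : strictly_increasing s -> forall k, (k <= s k)%nat.
Proof. intros Hs k; induction k; [lia | specialize (Hs k); lia]. Qed.

Lemma strictly_increasing_lt s : strictly_increasing s -> forall a b, (a < b)%nat -> (s a < s b)%nat.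
Proof. intros Hs a b Hab; induction Hab; [apply Hs | specialize (Hs m); lia]. Qed.

Lemma compact_op_uniform_tail T : compact_op T ->
  forall eps, 0 < eps -> exists N, uniform_tail_le N eps T.
Proof.
  intros HT eps Heps; apply NNPP; intro Hc.
  assert (Hbad : forall N, exists p : H * nat, normsq_le (hv (fst p)) 1 /\
                   eps < tail_sum (hv (op T (fst p))) N (snd p)).
  { intro N; apply NNPP; intro Hc2; apply Hc; exists N; intros x Hx n.
    apply Rnot_lt_le; intro; apply Hc2; exists (x, n); auto. }
  destruct (choice _ Hbad) as [f Hf].
  destruct (HT (fun N => fst (f N))) as (phi & y & Hphi & Hcv).
  { exists 1; intro k; apply (Hf k). }
  destruct (l2_tail_sum_small (hv y) (proj2_sig y) (eps / 4) ltac:(lra)) as [N0 HN0].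
  destruct (Hcv (sqrt (eps / 4)) ltac:(apply sqrt_lt_R0; lra)) as [K HK].
  set (k := Nat.max K N0).
  destruct (HK k ltac:(lia)) as (d & Hd & Hdist).
  rewrite sqrt_sqrt in Hd by lra.
  destruct (Hf (phi k)) as [_ Hgt].
  set (z := hv (op T (fst (f (phi k))))) in *; set (n := snd (f (phi k))) in *.
  assert (HNk : (N0 <= phi k)%nat) by (pose proof (strictly_increasing_ge phi Hphi k); lia).
  pose proof (tail_sum_le_weighted (hv y) z (phi k) n 1 ltac:(lra)) as Hw.
  rewrite Rinv_1 in Hw.
  pose proof (Rle_trans _ _ _ (tail_sum_antimono (hv y) N0 (phi k) n HNk) (HN0 n)).
  pose proof (Rle_trans _ _ _ (tail_sum_le_psum (vsub z (hv y)) (phi k) n) (Hdist n)).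
  lra.
Qed.

Lemma bounded_cv_subseq (u : nat -> R) A : (forall k, Rabs (u k) <= A) ->
  exists t, strictly_increasing t /\ exists l, Un_cv (fun k => u (t k)) l.
Proof.
  intro Hb.
  destruct (Bolzano_Weierstrass u (fun c => -A <= c <= A) (compact_P3 (-A) A)) as [l Hl].
  { intro k; specialize (Hb k); pose proof (Rle_abs (u k)); pose proof (Rle_abs (- u k)).
    rewrite Rabs_Ropp in *; lra. }
  assert (Hnext : forall p : nat * nat, exists q,
             (fst p <= q)%nat /\ Rabs (u q - l) < / INR (S (snd p))).
  { intros [N j]; simpl.
    assert (Hj : 0 < / INR (S j)) by (apply Rinv_0_lt_compat, lt_0_INR; lia).
    destruct (Hl (disc l (mkposreal _ Hj)) N) as (q & Hq & Hql).
    - exists (mkposreal _ Hj); intros z Hz; exact Hz.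
    - exists q; auto. }
  destruct (choice _ Hnext) as [next Hnext'].
  set (t := fix t k := match k with 0 => next (0, 0)%nat | S k' => next (S (t k'), S k') end).
  exists t; split.
  - intro k; simpl; destruct (Hnext' (S (t k), S k)) as [Hge _]; simpl in Hge; lia.
  - exists l; intros eps Heps.
    destruct (archimed_cor1 eps Heps) as (N & HN & HN0).
    exists N; intros k Hk; unfold Rdist.
    assert (Hk' : Rabs (u (t k) - l) < / INR (S k))
      by (destruct k; simpl; [apply (Hnext' (0, 0)%nat) | apply (Hnext' (S (t k), S k))]).
    eapply Rlt_trans; [apply Hk'|]; eapply Rle_lt_trans; [|apply HN].
    apply Rinv_le_contravar; [apply lt_0_INR; lia | apply le_INR; lia].
Qed.

Lemma Un_cv_eventual_subseq (v : nat -> R) (u d : nat -> nat) c l :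
  Un_cv (fun j => v (u j)) l ->
  (forall k, (c <= k)%nat -> exists j, (k <= j)%nat /\ d k = u j) ->
  Un_cv (fun k => v (d k)) l.
Proof.
  intros Hcv Hd eps Heps; destruct (Hcv eps Heps) as [N HN].
  exists (Nat.max N c); intros k Hk; destruct (Hd k ltac:(lia)) as (j & Hj & ->).
  apply HN; lia.
Qed.

Fixpoint iterated_extraction (f : nat -> (nat -> nat) -> nat -> nat) (n : nat) : nat -> nat :=
  match n with
  | 0 => f 0%nat (fun k => k)
  | S n' => fun k => iterated_extraction f n' (f (S n') (iterated_extraction f n') k)
  end.

(* The second hypothesis says that [P c] passes from [u] to any [d] whose terms from
   index [c] on are terms of [u] at no earlier position: the diagonal sequence stands in
   this relation to the [c]-th extraction. *)
Lemma diagonal_extraction (P : nat -> (nat -> nat) -> Prop) :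
  (forall c s, exists t, strictly_increasing t /\ P c (fun k => s (t k))) ->
  (forall c u d, P c u -> (forall k, (c <= k)%nat -> exists j, (k <= j)%nat /\ d k = u j) ->
     P c d) ->
  exists d, strictly_increasing d /\ forall c, P c d.
Proof.
  intros Hstep Hstable.
  destruct (choice (fun cs t => strictly_increasing t /\ P (fst cs) (fun k => snd cs (t k))))
    as [g Hg]; [intros [c s]; apply Hstep|].
  set (f := fun c s => g (c, s)); set (s := iterated_extraction f).
  assert (Hs : forall n, strictly_increasing (s n) /\ P n (s n)).
  { induction n as [|n [Hinc _]]; [apply (Hg (0%nat, fun k => k))|].
    destruct (Hg (S n, s n)) as [Hinc' HP]; split; [|exact HP].
    intro k; apply (strictly_increasing_lt _ Hinc), Hinc'. }
  assert (Hlater : forall c n, (c <= n)%nat ->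
            forall k, exists j, (k <= j)%nat /\ s n k = s c j).
  { intros c n; induction n as [|n IH]; intros Hc k.
    - replace c with 0%nat by lia; exists k; auto.
    - destruct (Nat.eq_dec c (S n)) as [->|Hne]; [exists k; auto|].
      destruct (IH ltac:(lia) (f (S n) (s n) k)) as (j & Hj & Hsj).
      exists j; split; [|exact Hsj].
      pose proof (strictly_increasing_ge _ (proj1 (Hg (S n, s n))) k); unfold f in Hj; lia. }
  exists (fun k => s k k); split.
  - intro k; simpl; apply (strictly_increasing_lt _ (proj1 (Hs k))).
    apply (strictly_increasing_ge _ (proj1 (Hg (S k, s k)))).
  - intro c; apply (Hstable c (s c)); [apply Hs|].
    intros k Hk; apply (Hlater c k Hk k).
Qed.

Definition converges_coordinatewise (w : nat -> vec) (y : vec) : Prop :=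
  forall c, Un_cv (fun k => re (w k c)) (re (y c)) /\ Un_cv (fun k => im (w k c)) (im (y c)).

Lemma Rabs_le_sqr_add1 r : Rabs r <= r * r + 1.
Proof. destruct (Rle_or_lt 0 r); [rewrite Rabs_right | rewrite Rabs_left]; nra. Qed.

Lemma coordinatewise_cv_subseq (z : nat -> vec) B : (forall k c, Cnorm2 (z k c) <= B) ->
  exists d y, strictly_increasing d /\ converges_coordinatewise (fun k => z (d k)) y.
Proof.
  intro Hb.
  assert (Hre : forall k c, Rabs (re (z k c)) <= B + 1).
  { intros k c; pose proof (Rabs_le_sqr_add1 (re (z k c))); specialize (Hb k c).
    unfold Cnorm2 in Hb; nra. }
  assert (Him : forall k c, Rabs (im (z k c)) <= B + 1).
  { intros k c; pose proof (Rabs_le_sqr_add1 (im (z k c))); specialize (Hb k c).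
    unfold Cnorm2 in Hb; nra. }
  destruct (diagonal_extraction (fun c u =>
      (exists l, Un_cv (fun k => re (z (u k) c)) l) /\
      (exists l, Un_cv (fun k => im (z (u k) c)) l))) as (d & Hd & Hcv).
  - intros c s.
    destruct (bounded_cv_subseq (fun k => re (z (s k) c)) (B + 1) (fun k => Hre _ _))
      as (t1 & Ht1 & l1 & Hl1).
    destruct (bounded_cv_subseq (fun k => im (z (s (t1 k)) c)) (B + 1) (fun k => Him _ _))
      as (t2 & Ht2 & l2 & Hl2).
    exists (fun k => t1 (t2 k)); split; [intro k; apply (strictly_increasing_lt _ Ht1), Ht2|].
    split; [exists l1 | exists l2; exact Hl2].
    apply (Un_cv_eventual_subseq (fun k => re (z (s (t1 k)) c)) (fun j => j) t2 0 l1 Hl1).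
    intros k _; exists (t2 k); split; [apply strictly_increasing_ge|]; auto.
  - intros c u d' [[l1 H1] [l2 H2]] Hd'.
    split; [exists l1 | exists l2].
    + exact (Un_cv_eventual_subseq (fun j => re (z j c)) u d' c l1 H1 Hd').
    + exact (Un_cv_eventual_subseq (fun j => im (z j c)) u d' c l2 H2 Hd').
  - destruct (choice (fun c p => Un_cv (fun k => re (z (d k) c)) (fst p) /\
                                 Un_cv (fun k => im (z (d k) c)) (snd p))) as [g Hg].
    { intro c; destruct (Hcv c) as [[l1 H1] [l2 H2]]; exists (l1, l2); auto. }
    exists d, (fun c => mkC (fst (g c)) (snd (g c))); split; [exact Hd | exact Hg].
Qed.

Lemma Un_cv_Cnorm2 (u : nat -> vec) (y : vec) c :
  converges_coordinatewise u y -> Un_cv (fun k => Cnorm2 (u k c)) (Cnorm2 (y c)).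
Proof. intro Hc; destruct (Hc c); unfold Cnorm2; apply CV_plus; apply CV_mult; auto. Qed.

Lemma Un_cv_Cnorm2_Csub (u : nat -> vec) (y : vec) c :
  converges_coordinatewise u y -> Un_cv (fun k => Cnorm2 (Csub (u k c) (y c))) 0.
Proof.
  intro Hc; destruct (Hc c) as [Hre Him]; unfold Cnorm2, Csub; simpl.
  assert (H0 : forall (v : nat -> R) l, Un_cv v l -> Un_cv (fun k => v k - l) 0).
  { intros v l Hv; replace 0 with (l - l) by ring; apply CV_minus; [exact Hv|].
    intros eps Heps; exists 0%nat; intros; unfold Rdist; rewrite Rminus_diag, Rabs_R0; lra. }
  replace 0 with (0 * 0 + 0 * 0) by ring; apply CV_plus; apply CV_mult; auto.
Qed.

Lemma Un_cv_sum_f_R0 (f : nat -> nat -> R) (g : nat -> R) n :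
  (forall c, Un_cv (fun k => f k c) (g c)) ->
  Un_cv (fun k => sum_f_R0 (f k) n) (sum_f_R0 g n).
Proof. intro Hc; induction n; simpl; [apply Hc | apply CV_plus; auto]. Qed.

Lemma Un_cv_le (u : nat -> R) l B : Un_cv u l -> (forall k, u k <= B) -> l <= B.
Proof.
  intros Hcv Hb; apply Rnot_lt_le; intro Hlt.
  destruct (Hcv (l - B) ltac:(lra)) as [N HN]; specialize (HN N (le_n N)).
  specialize (Hb N); unfold Rdist in HN; apply Rabs_def2 in HN; lra.
Qed.

Lemma converges_of_coordinatewise (w : nat -> H) (y : H) :
  converges_coordinatewise (fun k => hv (w k)) (hv y) ->
  (forall a, 0 < a -> exists N, forall k n, tail_sum (hv (w k)) N n <= a) ->
  converges w y.
Proof.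
  intros Hcw Htail eps Heps.
  set (a := eps * eps / 8).
  destruct (Htail a ltac:(unfold a; nra)) as [N HN].
  assert (Hy : forall n, tail_sum (hv y) N n <= a).
  { intro n; apply (Un_cv_le (fun k => tail_sum (hv (w k)) N n)); [|intro k; apply HN].
    apply (Un_cv_sum_f_R0 (fun k => tail_term (hv (w k)) N)); intro c; unfold tail_term.
    destruct (Nat.leb c N); [|now apply (Un_cv_Cnorm2 (fun k => hv (w k)))].
    intros e He; exists 0%nat; intros; unfold Rdist; rewrite Rminus_diag, Rabs_R0; lra. }
  assert (Hhead : Un_cv (fun k => psum (vsub (hv (w k)) (hv y)) N) 0).
  { replace 0 with (sum_f_R0 (fun _ => 0) N) by (rewrite sum_cte; ring).
    apply (Un_cv_sum_f_R0 (fun k c => Cnorm2 (vsub (hv (w k)) (hv y) c))); intro c.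
    apply (Un_cv_Cnorm2_Csub (fun k => hv (w k)) _ _ Hcw). }
  destruct (Hhead (eps * eps / 2) ltac:(nra)) as [K HK].
  exists K; intros k Hk; specialize (HK k Hk); unfold Rdist in HK.
  rewrite Rminus_0_r in HK; apply Rabs_def2 in HK.
  exists (psum (vsub (hv (w k)) (hv y)) N + 4 * a); split; [unfold a; lra|].
  intro n; pose proof (psum_le_head_tail (vsub (hv (w k)) (hv y)) N n).
  pose proof (tail_sum_vsub_le (hv (w k)) (hv y) N n); pose proof (HN k n); pose proof (Hy n).
  lra.
Qed.

Lemma uniform_tail_compact_op T :
  (forall eps, 0 < eps -> exists N, uniform_tail_le N eps T) -> compact_op T.
Proof.
  intros Hunif x [M0 HM0].
  pose proof (Rle_trans _ _ _ (psum_ge0 (hv (x 0%nat)) 0) (HM0 0%nat 0%nat)).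
  set (M := M0 + 1); assert (HM : 0 < M) by (unfold M; lra).
  assert (HxM : forall k, normsq_le (hv (x k)) M) by (intros k n; specialize (HM0 k n); unfold M; lra).
  destruct (op_bdd T) as (K & _ & HK).
  set (B := K * K * M); set (z := fun k => hv (op T (x k))).
  assert (Hz : forall k, normsq_le (z k) B) by (intro k; apply HK, HxM).
  destruct (coordinatewise_cv_subseq z B) as (d & y & Hd & Hcw).
  { intros k c; exact (Rle_trans _ _ _ (Cnorm2_le_psum (z k) c) (Hz k c)). }
  assert (Hy : normsq_le y B).
  { intro n; apply (Un_cv_le (fun k => psum (z (d k)) n)); [|intro k; apply Hz].
    apply (Un_cv_sum_f_R0 (fun k c => Cnorm2 (z (d k) c))); intro c.
    now apply (Un_cv_Cnorm2 (fun k => z (d k))). }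
  exists d, (exist _ y (ex_intro _ B Hy)); split; [exact Hd|].
  apply converges_of_coordinatewise; [exact Hcw|]; intros a Ha.
  destruct (Hunif (a / M) ltac:(apply Rdiv_lt_0_compat; lra)) as [N HN].
  exists N; intros k n.
  replace a with (M * (a / M)) by (field; lra).
  exact (uniform_tail_le_ball N (a / M) T (x (d k)) M HM HN (HxM _) n).
Qed.

Theorem mainTheorem6 : SOT_Fsigmadelta compact_op.
Proof.
  exists (fun m N => uniform_tail_le N (/ INR (S m))); split.
  - intros m N; apply uniform_tail_le_closed, Rinv_0_lt_compat, lt_0_INR; lia.
  - intro T; split.
    + intros HT m; apply compact_op_uniform_tail;
        [exact HT | apply Rinv_0_lt_compat, lt_0_INR; lia].
    + intro HT; apply uniform_tail_compact_op; intros eps Heps.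
      destruct (archimed_cor1 eps Heps) as (m & Hm & Hm0).
      destruct (HT (Nat.pred m)) as [N HN]; exists N.
      apply (uniform_tail_le_weaken N (/ INR (S (Nat.pred m)))); [|exact HN].
      replace (S (Nat.pred m)) with m by lia; lra.
Qed.
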